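(* Let $G$ be a modular noetherian right $\ell$-group with strong order unit $s$ and degree homomorphism $\deg$. For $g \in G^-$, the sequence \[ \iota_i(g) := \deg(g \vee s^{-i}) - \deg(g \vee s^{-(i-1)}) \qquad (i \geq 1) \] is non-increasing.
   Context: A right $\ell$-group is a group $G$ (identity $e$) with a right-invariant partial order making $G$ a lattice. It is modular if the lattice is modular. It is noetherian if for each $g$ the set $\{h \geq g\}$ satisfies the descending chain condition and the set $\{h \leq g\}$ satisfies the ascending chain condition. $G^- = \{g \leq e\}$. A strong order unit is an element $s > e$ such that $x \mapsto sx$ is a lattice automorphism of $G$ and every $g$ satisfies $g \leq s^k$ for some $k \in \mathbb{Z}$. The degree homomorphism $\deg : G \to \mathbb{Z}$ is the unique group homomorphism sending each $g \in G^-$ to the (well-defined) number of factors in any factorization of $g$ into elements covered by $e$. *)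

From mathcomp Require Import all_boot all_order all_algebra.
From Stdlib Require List.
Set Implicit Arguments. Unset Strict Implicit. Unset Printing Implicit Defensive.
Import GRing.Theory Num.Theory.

Record rlgroup := RLGroup {
  car :> Type;
  mul : car -> car -> car;
  gone : car;
  inv : car -> car;
  le : car -> car -> Prop;
  join : car -> car -> car;
  meet : car -> car -> car;
  mulA : forall x y z, mul x (mul y z) = mul (mul x y) z;
  mul1x : forall x, mul gone x = x;
  mulx1 : forall x, mul x gone = x;
  mulVx : forall x, mul (inv x) x = gone;
  mulxV : forall x, mul x (inv x) = gone;
  le_refl : forall x, le x x;
  le_trans : forall x y z, le x y -> le y z -> le x z;
  le_anti : forall x y, le x y -> le y x -> x = y;
  le_rmul : forall x y z, le x y -> le (mul x z) (mul y z);
  join_l : forall x y, le x (join x y);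
  join_r : forall x y, le y (join x y);
  join_lub : forall x y z, le x z -> le y z -> le (join x y) z;
  meet_l : forall x y, le (meet x y) x;
  meet_r : forall x y, le (meet x y) y;
  meet_glb : forall x y z, le z x -> le z y -> le z (meet x y)
}.

Arguments mul {r}. Arguments gone {r}. Arguments inv {r}. Arguments le {r}.
Arguments join {r}. Arguments meet {r}.

Section Defs.
Variable G : rlgroup.

Definition lt (x y : G) : Prop := le x y /\ x <> y.

Definition covered_by_e (c : G) : Prop :=
  lt c gone /\ forall h : G, lt c h -> ~ lt h gone.

Definition modular : Prop :=
  forall x y z : G, le x z -> join x (meet y z) = meet (join x y) z.

Definition noetherian : Prop :=
  forall g : G,
    (~ exists f : nat -> G, (forall n, le g (f n)) /\ (forall n, lt (f n.+1) (f n)))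
 /\ (~ exists f : nat -> G, (forall n, le (f n) g) /\ (forall n, lt (f n) (f n.+1))).

Definition gpow (x : G) (n : nat) : G := iter n (mul x) gone.

Definition zpow (x : G) (k : int) : G :=
  match k with
  | Posz n => gpow x n
  | Negz n => inv (gpow x n.+1)
  end.

Definition strong_order_unit (s : G) : Prop :=
  lt gone s
  /\ bijective (mul s)
  /\ (forall x y : G, mul s (join x y) = join (mul s x) (mul s y))
  /\ (forall x y : G, mul s (meet x y) = meet (mul s x) (mul s y))
  /\ (forall g : G, exists k : int, le g (zpow s k)).

Definition degree_hom (deg : G -> int) : Prop :=
  (forall x y : G, deg (mul x y) = (deg x + deg y)%R)
  /\ (forall l : seq G, (forall c, List.In c l -> covered_by_e c) ->
        deg (foldr mul gone l) = Posz (size l)).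

Definition iotad (s : G) (deg : G -> int) (i : nat) (g : G) : int :=
  (deg (join g (zpow s (- (Posz i))%R)) - deg (join g (zpow s (- (Posz i - 1))%R)))%R.

End Defs.

From Pilot Require Import Defs.
From mathcomp Require Import all_boot all_order all_algebra.
From mathcomp Require Import zify.
From Stdlib Require Import Classical ClassicalEpsilon.
Import Pilot.Defs.
Set Implicit Arguments. Unset Strict Implicit. Unset Printing Implicit Defensive.
Import GRing.Theory Num.Theory.

(* Idea: in a modular lattice, joining with a fixed element w maps a cover
   c < d either to a cover or to an equality, so along a maximal chain from x
   up to y (which exists by the chain conditions) the degree drop from x \/ w
   to y \/ w is at most the degree drop from x to y. Left multiplication by s
   is a lattice automorphism shifting s^-(i+1) to s^-i, so iota_(i+1)(g) is
   the degree drop from (g \/ s^-i) \/ sg to (g \/ s^-(i-1)) \/ sg, using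
   g <= sg; this is at most the drop from g \/ s^-i to g \/ s^-(i-1), which
   is iota_i(g). *)

Lemma no_descent_minimal (A : Type) (S : A -> Prop) (R : A -> A -> Prop) :
  (~ exists f : nat -> A, (forall n, S (f n)) /\ (forall n, R (f n.+1) (f n))) ->
  (exists x, S x) -> exists m, S m /\ forall t, S t -> ~ R t m.
Proof.
move=> no_descent [x0 Sx0]; apply: NNPP => no_min.
have next x : exists t, S x -> S t /\ R t x.
  case: (classic (S x)) => Sx; last by exists x.
  apply: NNPP => no_next; apply: no_min; exists x; split=> // t St Rtx.
  by apply: no_next; exists t.
pose f x := proj1_sig (constructive_indefinite_description _ (next x)).
have fP x : S x -> S (f x) /\ R (f x) x.
  by rewrite /f; case: constructive_indefinite_description.
have S_iter n : S (iter n f x0) by elim: n => [|n IH] //=; case: (fP _ IH).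
apply: no_descent; exists (fun n => iter n f x0); split=> // n /=.
by case: (fP _ (S_iter n)).
Qed.

Section RLGroupTheory.
Variable G : rlgroup.
Implicit Types x y z w c d h : G.

Lemma rmul_inj z : injective (fun x => mul x z).
Proof. by move=> x y /= E; rewrite -(mulx1 x) -(mulx1 y) -(mulxV z) !mulA E. Qed.

Lemma lmul_inj z : injective (@mul G z).
Proof. by move=> x y E; rewrite -(mul1x x) -(mul1x y) -(mulVx z) -!mulA E. Qed.

Lemma inv_unique x y : mul x y = gone -> y = inv x.
Proof. by move=> xy1; apply: (@lmul_inj x); rewrite xy1 mulxV. Qed.

Lemma invM x y : inv (mul x y) = mul (inv y) (inv x).
Proof. by symmetry; apply: inv_unique; rewrite -mulA (mulA y) mulxV mul1x mulxV. Qed.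

Lemma inv1 : inv (@gone G) = gone.
Proof. by symmetry; apply: inv_unique; rewrite mulx1. Qed.

Lemma lt_rmul x y z : lt x y -> lt (mul x z) (mul y z).
Proof. by move=> [le_xy ne_xy]; split; [apply: le_rmul | move/rmul_inj]. Qed.

Lemma joinC x y : join x y = join y x.
Proof. by apply: le_anti; apply: join_lub; (apply: join_r || apply: join_l). Qed.

Lemma joinA x y z : join x (join y z) = join (join x y) z.
Proof.
apply: le_anti; apply: join_lub.
- exact: le_trans (join_l x y) (join_l _ z).
- apply: join_lub; last exact: join_r.
  exact: le_trans (join_r x y) (join_l _ z).
- apply: join_lub; first exact: join_l.
  exact: le_trans (join_l y z) (join_r x _).
- exact: le_trans (join_r y z) (join_r x _).
Qed.

Lemma join_eq_r x y : le x y -> join x y = y.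
Proof.
by move=> le_xy; apply: le_anti; [apply: join_lub => //; apply: le_refl | apply: join_r].
Qed.

Lemma joinSl x y w : le x y -> le (join x w) (join y w).
Proof.
by move=> le_xy; apply: join_lub; [apply: le_trans le_xy (join_l y w) | apply: join_r].
Qed.

Lemma joinSr x y w : le x y -> le (join w x) (join w y).
Proof. by rewrite !(joinC w); apply: joinSl. Qed.

Lemma meet_eq_r x y : le x y -> meet y x = x.
Proof.
by move=> le_xy; apply: le_anti; [apply: meet_r | apply: meet_glb => //; apply: le_refl].
Qed.

Definition cover c d := lt c d /\ forall h, lt c h -> ~ lt h d.

Inductive cover_chain : G -> G -> Prop :=
| cover_chain_refl y : cover_chain y y
| cover_chain_step c d y : cover c d -> cover_chain d y -> cover_chain c y.

Lemma cover_join_or_eq c d w : modular G -> cover c d ->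
  join c w = join d w \/ cover (join c w) (join d w).
Proof.
move=> modG [[le_cd ne_cd] cover_cd].
case: (classic (join c w = join d w)) => [|ne_cwdw]; [by left | right].
split; first by split=> //; apply: joinSl.
move=> h [le_cwh ne_cwh] [le_hdw ne_hdw].
have le_ch : le c h := le_trans (join_l c w) le_cwh.
have meet_dh : meet d h = c.
  apply: NNPP => ne_meet_c.
  case: (classic (meet d h = d)) => [meet_d | ne_meet_d].
    apply: ne_hdw; apply: le_anti => //; apply: join_lub.
      by rewrite -meet_d; apply: meet_r.
    exact: le_trans (join_r c w) le_cwh.
  apply: (cover_cd (meet d h)); last by split=> //; apply: meet_l.
  by split=> [|E]; [apply: meet_glb | apply: ne_meet_c].
have join_cwc : join (join c w) c = join c w.
  by rewrite joinC joinA (join_eq_r (le_refl c)).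
have join_cwd : join (join c w) d = join d w.
  by rewrite joinC joinA (joinC d c) (join_eq_r le_cd).
apply: ne_cwh; have := modG (join c w) d h le_cwh.
by rewrite meet_dh join_cwc join_cwd (meet_eq_r le_hdw).
Qed.

Section Noetherian.
Hypothesis noethG : noetherian G.

Lemma exists_maximal_below y (P : G -> Prop) :
  (exists x, le x y /\ P x) ->
  exists m, (le m y /\ P m) /\ forall t, le t y /\ P t -> ~ lt m t.
Proof.
apply: no_descent_minimal => -[f [f_below f_incr]].
by apply: (proj2 (noethG y)); exists f; split=> [n|//]; case: (f_below n).
Qed.

Lemma exists_minimal_above x (P : G -> Prop) :
  (exists y, le x y /\ P y) ->
  exists m, (le x m /\ P m) /\ forall t, le x t /\ P t -> ~ lt t m.
Proof.
apply: no_descent_minimal => -[f [f_above f_decr]].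
by apply: (proj1 (noethG x)); exists f; split=> [n|//]; case: (f_above n).
Qed.

Lemma exists_cover_le x y : lt x y -> exists z, cover x z /\ le z y.
Proof.
move=> lt_xy.
have [z [[_ [lt_xz le_zy]] min_z]] :=
  @exists_minimal_above x (fun z => lt x z /\ le z y)
    (ex_intro _ y (conj (proj1 lt_xy) (conj lt_xy (le_refl y)))).
exists z; split=> //; split=> // h lt_xh lt_hz; apply: (min_z h) => //.
by split; [case: lt_xh | split=> //; apply: le_trans (proj1 lt_hz) le_zy].
Qed.

Lemma cover_chain_of_le x y : le x y -> cover_chain x y.
Proof.
move=> le_xy; apply: NNPP => no_chain.
have [m [[le_my no_chain_m] max_m]] :=
  @exists_maximal_below y (fun m => ~ cover_chain m y)
    (ex_intro _ x (conj le_xy no_chain)).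
have lt_my : lt m y by split=> // E; apply: no_chain_m; rewrite E; constructor.
have [z [cover_mz le_zy]] := exists_cover_le lt_my.
apply: no_chain_m; apply: (cover_chain_step cover_mz).
by apply: NNPP => no_chain_z; apply: (max_m z) => //; case: cover_mz.
Qed.

End Noetherian.

Section Degree.
Variable deg : G -> int.
Hypothesis degG : degree_hom deg.

Lemma deg_cover c d : cover c d -> deg c = (deg d + 1)%R.
Proof.
move=> [[le_cd ne_cd] cover_cd].
have c_eq : c = mul (mul c (inv d)) d by rewrite -mulA mulVx mulx1.
have covered_cd : covered_by_e (mul c (inv d)).
  split.
    split; first by rewrite -(mulxV d); apply: le_rmul.
    by move=> E; apply: ne_cd; rewrite c_eq E mul1x.
  move=> h lt_h lt_h1; apply: (cover_cd (mul h d)).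
    by rewrite {1}c_eq; apply: lt_rmul.
  by rewrite -{2}(mul1x d); apply: lt_rmul.
have := (proj2 degG) [:: mul c (inv d)]; rewrite /= mulx1 => deg1.
rewrite {1}c_eq (proj1 degG) deg1; first by rewrite addrC.
by move=> c' [<- | []].
Qed.

Lemma deg_join_sub_le_chain x y w : modular G -> cover_chain x y ->
  (deg (join x w) - deg (join y w) <= deg x - deg y)%R.
Proof.
move=> modG; elim=> [y0 | c d y0 cover_cd _ IH]; first by rewrite !subrr.
have deg_cd := deg_cover cover_cd.
have : (deg (join c w) - deg (join d w) <= 1)%R.
  case: (cover_join_or_eq w modG cover_cd) => [-> | cover_cdw].
    by rewrite subrr.
  by rewrite (deg_cover cover_cdw); lia.
lia.
Qed.

Lemma deg_join_sub_le x y w : modular G -> noetherian G -> le x y ->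
  (deg (join x w) - deg (join y w) <= deg x - deg y)%R.
Proof.
move=> modG noethG le_xy.
by apply: deg_join_sub_le_chain => //; apply: cover_chain_of_le.
Qed.

End Degree.

Section OrderUnit.
Variable s : G.
Hypothesis s_gt1 : lt gone s.

Lemma mul_gpowC n : mul s (gpow s n) = mul (gpow s n) s.
Proof. by elim: n => [|n IH] /=; [rewrite mul1x mulx1 | rewrite -mulA -IH]. Qed.

Lemma zpowN_nat n : zpow s (- Posz n)%R = inv (gpow s n).
Proof. by case: n => [|n] //=; rewrite inv1. Qed.

Lemma mul_zpowNS n : mul s (zpow s (- Posz n.+1)%R) = zpow s (- Posz n)%R.
Proof. by rewrite !zpowN_nat /= mul_gpowC invM mulA mulxV mul1x. Qed.

Lemma zpowNS_le n : le (zpow s (- Posz n.+1)%R) (zpow s (- Posz n)%R).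
Proof.
by have := le_rmul (zpow s (- Posz n.+1)%R) (proj1 s_gt1); rewrite mul1x mul_zpowNS.
Qed.

Lemma le_mul_unit g : le g (mul s g).
Proof. by have := le_rmul g (proj1 s_gt1); rewrite mul1x. Qed.

End OrderUnit.

Lemma deg_join_zpowNS s (deg : G -> int) g n :
  (forall x y, mul s (join x y) = join (mul s x) (mul s y)) -> degree_hom deg ->
  deg (join g (zpow s (- Posz n.+1)%R)) =
    (deg (join (mul s g) (zpow s (- Posz n)%R)) - deg s)%R.
Proof.
by move=> s_join [deg_mul _]; rewrite -(mul_zpowNS s n) -s_join deg_mul; lia.
Qed.

End RLGroupTheory.

Lemma iotadS (G : rlgroup) (s : G) deg i g :
  iotad s deg i.+1 g =
    (deg (join g (zpow s (- Posz i.+1)%R)) - deg (join g (zpow s (- Posz i)%R)))%R.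
Proof. by rewrite /iotad; have -> : (Posz i.+1 - 1 = Posz i)%R by lia. Qed.

Theorem mainTheorem5 (G : rlgroup) (s : G) (deg : G -> int) :
  modular G -> noetherian G -> strong_order_unit s -> degree_hom deg ->
  forall g : G, le g gone ->
  forall i : nat, (1 <= i)%N -> (iotad s deg i.+1 g <= iotad s deg i g)%R.
Proof.
move=> modG noethG [s_gt1 [_ [s_join _]]] degG g _ [|i] // _.
pose t n := zpow s (- Posz n)%R.
have shift n : deg (join g (t n.+1)) = (deg (join (mul s g) (t n)) - deg s)%R.
  exact: deg_join_zpowNS.
have join_sg n : join (join g (t n)) (mul s g) = join (mul s g) (t n).
  by rewrite (joinC g) -joinA (join_eq_r (le_mul_unit s_gt1 g)) joinC.
have iota_shift : iotad s deg i.+2 g =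
    (deg (join (mul s g) (t i.+1)) - deg (join (mul s g) (t i)))%R.
  by rewrite iotadS -/(t i.+2) -/(t i.+1) !shift; lia.
rewrite iota_shift iotadS -!join_sg /t.
exact: (deg_join_sub_le degG (mul s g) modG noethG (joinSr g (zpowNS_le s_gt1 i))).
Qed.
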